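(* Let $G$ be a finite connected weighted graph with $N$ vertices and let $\lambda_{N-1}$ be the largest eigenvalue of its weighted Laplacian $L_w$. For any $S_0\subset V(G)$ with $S_0\cup b(S_0)=V(G)$, \[ \mathcal{N}\left[0,\ K_0(S_0)/2\right)\le|S_0|\quad\text{and}\quad\mathcal{N}\left[K_0(S_0)/2,\ \lambda_{N-1}\right]\ge N-|S_0|. \]
   Context: $G$ has vertex set $V(G)$ and symmetric weights $w\ge0$ with $w(u,u)=0$; $u\sim v$ iff $w(u,v)>0$; connected refers to this edge relation. $(L_wf)(v)=\sum_u(f(v)-f(u))w(v,u)$ on $\ell^2(G)$ (vertex weight $\nu\equiv1$). $\mathcal{N}I$ is the number of eigenvalues of $L_w$ in the interval $I$ counted with multiplicity. For $S\subset V(G)$: $cl(S)=S\cup\{v:\exists u\in S,\ u\sim v\}$ and $b(S)=cl(S)\setminus S$. $K_0(S_0)=\inf_{v\in b(S_0)}\sum_{u\in S_0}w(u,v)$. *)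

From HB Require Import structures.
From mathcomp Require Import all_boot all_order all_algebra.
From mathcomp Require Import all_classical all_reals ereal.
From mathcomp Require Import polyrcf.
Set Implicit Arguments. Unset Strict Implicit. Unset Printing Implicit Defensive.
Import Order.TTheory GRing.Theory Num.Theory.
Local Open Scope ring_scope.

Section Defs.
Variable R : realType.
Variable N : nat.
Variable w : 'I_N -> 'I_N -> R.

Definition adj : rel 'I_N := [rel u v | 0 < w u v].

Definition connected_graph : Prop := forall u v, connect adj u v.

(* matrix of (L_w f)(v) = sum_u (f v - f u) w(v,u) *)
Definition laplacian : 'M[R]_N :=
  \matrix_(v, u) ((v == u)%:R * (\sum_(x < N) w v x) - w v u).

Definition cl (S : {set 'I_N}) : {set 'I_N} :=
  S :|: [set v | [exists u in S, adj u v]].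
Definition bnd (S : {set 'I_N}) : {set 'I_N} := cl S :\: S.

(* K_0(S0) = inf_{v in b(S0)} sum_{u in S0} w(u,v), an extended real
   (= +oo when b(S0) is empty) *)
Definition K0 (S0 : {set 'I_N}) : \bar R :=
  ereal_inf [set (\sum_(u in S0) w u v)%:E | v in [set v | v \in bnd S0]].
End Defs.

Definition eig_count (R : realType) (n : nat) (A : 'M[R]_n) (P : pred R) : nat :=
  \sum_(x <- rootsR (char_poly A) | P x) mup x (char_poly A).

(* Largest eigenvalue (rootsR is sorted increasingly). *)
Definition lambda_max (R : realType) (n : nat) (A : 'M[R]_n) : R :=
  last 0 (rootsR (char_poly A)).

From HB Require Import structures.
From mathcomp Require Import all_boot all_order all_algebra.
From mathcomp Require Import all_classical all_reals ereal.
From mathcomp Require Import polyrcf complex ring zify.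
Import Order.TTheory GRing.Theory Num.Theory.
Local Open Scope ring_scope.
Local Open Scope sesquilinear_scope.
Set Implicit Arguments. Unset Strict Implicit.

(* The Laplacian is real symmetric and positive semidefinite, with
   2 f^* L f = \sum_(v,u) w(v,u) |f v - f u|^2.  For f vanishing on S0 this is
   at least \sum_(v \notin S0) (\sum_(u \in S0) w(u,v)) |f v|^2 >= K0(S0) |f|^2,
   because every vertex outside S0 lies in b(S0).  If more than |S0| eigenvalues
   were below K0(S0), their eigenvectors would span a space of dimension > |S0|,
   which meets the (N - |S0|)-dimensional space of functions vanishing on S0;
   a nonzero f in the intersection has Rayleigh quotient both < K0(S0) and
   >= K0(S0).  So the first bound even holds with K0(S0) in place of K0(S0)/2,
   and the second is its complement, as all eigenvalues lie in [0, lambda_max]. *)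

Lemma char_poly_similar (F : fieldType) n (P A : 'M[F]_n) : P \in unitmx ->
  char_poly (invmx P *m A *m P) = char_poly A.
Proof.
move=> Pu; rewrite /char_poly /char_poly_mx.
set Pi := map_mx polyC (invmx P); set Pp := map_mx polyC P.
have PiPp : Pi *m Pp = 1%:M by rewrite -map_mxM mulVmx // map_mx1.
have -> : 'X%:M - map_mx polyC (invmx P *m A *m P) =
          Pi *m ('X%:M - map_mx polyC A) *m Pp.
  rewrite !map_mxM mulmxBr mulmxBl -/Pi -/Pp; congr (_ - _).
  by rewrite scalar_mxC -mulmxA PiPp mulmx1.
rewrite !det_mulmx mulrC mulrA -det_mulmx.
by rewrite [Pp *m Pi]mulmx1C ?det1 ?mul1r // PiPp.
Qed.

Lemma mem_rootsR (R : rcfType) (p : {poly R}) x :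
  p != 0 -> (x \in rootsR p) = root p x.
Proof. by move=> /roots_on_rootsR/(_ x) <-. Qed.

Lemma le_last_path (R : numDomainType) (y : R) s :
  path <%R y s -> {in y :: s, forall x, x <= last y s}.
Proof.
elim: s y => [|z s IHs] y /=; first by move=> _ x; rewrite inE => /eqP ->.
move=> /andP[y_lt_z z_path] x; rewrite inE => /predU1P[->|]; last exact: IHs.
by rewrite (le_trans (ltW y_lt_z)) // IHs // mem_head.
Qed.

Lemma sum_mup_rootsR_prod_XsubC (R : rcfType) (s : seq R) (P : pred R) :
  \sum_(x <- rootsR (\prod_(y <- s) ('X - y%:P)) | P x)
     mup x (\prod_(y <- s) ('X - y%:P)) = count P s.
Proof.
set p := \prod_(y <- s) _.
have pn0 : p != 0 by rewrite monic_neq0 // monic_prod_XsubC.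
have rootsR_undup : perm_eq (rootsR p) (undup s).
  apply: uniq_perm; rewrite ?uniq_roots ?undup_uniq // => x.
  by rewrite mem_undup mem_rootsR // root_prod_XsubC.
rewrite (perm_big _ rootsR_undup) /=.
under eq_bigr do rewrite mu_prod_XsubC.
rewrite -sum1_count -(big_undup_iterop_count _ _ _ (fun _ => 1%N)).
apply: eq_bigr => x _; case: (count_mem x s) => // k.
by rewrite iteropS; elim: k => // k IHk; rewrite iterS IHk.
Qed.

Lemma rowsub_unitarymx (C : numClosedFieldType) m n (g : 'I_m -> 'I_n)
    (M : 'M[C]_n) :
  injective g -> M \is unitarymx -> rowsub g M \is unitarymx.
Proof.
move=> g_inj /unitarymxP MU; apply/unitarymxP/matrixP => i j.
rewrite [RHS]mxE -(inj_eq g_inj).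
have := congr1 (fun X : 'M[C]_n => X (g i) (g j)) MU; rewrite /= [RHS]mxE => <-.
by rewrite !mxE; apply: eq_bigr => k _; rewrite !mxE.
Qed.

Lemma mulmx_rowsub1_eq0 (F : fieldType) p k m (D : 'M[F]_(p, k))
    (g : 'I_k -> 'I_m) i j :
  (forall l, g l != j) -> (D *m rowsub g 1%:M) i j = 0.
Proof.
by move=> gNj; rewrite mxE big1 // => l _; rewrite !mxE (negbTE (gNj l)) mulr0.
Qed.

Lemma ltr_sum_at (R : numDomainType) (I : finType) (P : pred I)
    (F G : I -> R) i0 :
  P i0 -> F i0 < G i0 -> (forall i, P i -> F i <= G i) ->
  \sum_(i | P i) F i < \sum_(i | P i) G i.
Proof.
move=> Pi0 FGi0 FG; rewrite (bigD1 i0) // [X in _ < X](bigD1 i0) //=.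
by apply: ltr_leD => //; apply: ler_sum => i /andP[/FG].
Qed.

Definition sqnorm (C : numClosedFieldType) n (f : 'rV[C]_n) : C :=
  \sum_j f 0 j * (f 0 j)^*.

Lemma sqnorm_unitary (C : numClosedFieldType) n (a : 'rV[C]_n) (U : 'M[C]_n) :
  U \is unitarymx -> sqnorm (a *m U) = sqnorm a.
Proof.
have sqnormE (f : 'rV[C]_n) : sqnorm f = (f *m f^t*) 0 0.
  by rewrite mxE; apply: eq_bigr => j _; rewrite !mxE.
by move=> U_unitary; rewrite !sqnormE trmx_mul map_mxM mulmxA mulmxtVK.
Qed.

Section SymmetricSpectrum.
Variables (R : realType) (n : nat) (A : 'M[R]_n).
Hypothesis A_sym : A^T = A.
Local Notation C := R[i].

(* MathComp's spectral theorem is stated over a numClosedFieldType, so A is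
   diagonalized as a matrix over R[i]. *)
Definition cplxmx : 'M[C]_n := map_mx (real_complex R) A.
Definition eigbasis : 'M[C]_n := spectralmx cplxmx.
Definition eigval (i : 'I_n) : R := complex.Re (spectral_diag cplxmx 0 i).
Definition qform (f : 'rV[C]_n) : C := (f *m cplxmx *m f^t*) 0 0.

Lemma cplxmx_real : cplxmx \is a realmx.
Proof.
by apply/mxOverP => i j; rewrite mxE; apply/complex_realP; exists (A i j).
Qed.

Lemma cplxmx_sym : cplxmx \is symmetricmx.
Proof.
apply/is_hermitianmxP; rewrite expr0 scale1r map_mx_id //.
by rewrite /cplxmx map_trmx A_sym.
Qed.

Lemma cplxmx_spectral :
  cplxmx = invmx eigbasis *m diag_mx (spectral_diag cplxmx) *m eigbasis.
Proof.
by apply/orthomx_spectralP; rewrite symmetric_normalmx ?cplxmx_sym ?cplxmx_real.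
Qed.

Lemma spectral_diagE i : spectral_diag cplxmx 0 i = (eigval i)%:C%C.
Proof.
have /mxOverP := hermitian_spectral_diag_real
  (realsym_hermsym cplxmx_sym cplxmx_real).
by move=> /(_ 0 i) /RRe_real.
Qed.

Lemma char_poly_eigval : char_poly A = \prod_i ('X - (eigval i)%:P).
Proof.
apply: (@map_poly_inj _ _ (real_complex R)).
rewrite map_char_poly -/cplxmx cplxmx_spectral.
rewrite char_poly_similar ?spectral_unit //.
rewrite char_poly_trig ?diag_mx_is_trig // rmorph_prod; apply: eq_bigr => i _.
by rewrite rmorphB /= map_polyX map_polyC /= mxE eqxx mulr1n spectral_diagE.
Qed.

Lemma eig_countE (P : pred R) : eig_count A P = #|[pred i | P (eigval i)]|.
Proof.
rewrite /eig_count char_poly_eigval.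
have -> : \prod_i ('X - (eigval i)%:P) =
          \prod_(x <- map eigval (enum 'I_n)) ('X - x%:P).
  by rewrite big_map big_enum.
rewrite sum_mup_rootsR_prod_XsubC count_map.
by rewrite -sum1_count big_enum_cond sum1_card.
Qed.

Lemma eigval_le_lambda_max i : eigval i <= lambda_max A.
Proof.
have pn0 : char_poly A != 0 by rewrite monic_neq0 // char_poly_monic.
have : eigval i \in rootsR (char_poly A).
  rewrite mem_rootsR // char_poly_eigval; apply/rootP.
  by rewrite horner_prod (bigD1 i) //= hornerXsubC subrr mul0r.
rewrite /lambda_max.
have : sorted <%R (rootsR (char_poly A)) by exact: sorted_roots.
by case: rootsR => [//|y s] /= /le_last_path; apply.
Qed.

Lemma qformE (f : 'rV[C]_n) :
  qform f = \sum_v \sum_u f 0 v * cplxmx v u * (f 0 u)^*.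
Proof.
rewrite /qform mxE exchange_big; apply: eq_bigr => u _ /=.
by rewrite !mxE big_distrl; apply: eq_bigr => v _; rewrite !mxE.
Qed.

Lemma qform_eigbasis (a : 'rV[C]_n) :
  qform (a *m eigbasis) = \sum_j (eigval j)%:C%C * (a 0 j * (a 0 j)^*).
Proof.
have U := spectral_unitarymx cplxmx; rewrite -/eigbasis in U.
rewrite /qform {1}cplxmx_spectral invmx_unitary // trmx_mul map_mxM.
rewrite !mulmxA mulmxtVK // -!mulmxA [eigbasis *m (_ *m _)]mulmxA.
rewrite (unitarymxP U) mul1mx mulmxA mxE; apply: eq_bigr => j _.
by rewrite mul_mx_diag !mxE spectral_diagE mulrCA mulrA.
Qed.

Lemma eigval_ge0 : (forall f, 0 <= qform f) -> forall j, 0 <= eigval j.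
Proof.
move=> qform_ge0 j; have := qform_ge0 (delta_mx 0 j *m eigbasis).
rewrite qform_eigbasis (bigD1 j) //= big1 ?addr0; last first.
  by move=> k kNj; rewrite mxE (negbTE kNj) andbF mul0r mulr0.
by rewrite mxE !eqxx /= conjC1 !mulr1 ler0c.
Qed.

Lemma exists_eigcomb_vanishing (J S : {set 'I_n}) : (#|S| < #|J|)%N ->
  exists a : 'rV[C]_n, [/\ a *m eigbasis != 0,
    {in ~: J, forall j, a 0 j = 0} & {in S, forall u, (a *m eigbasis) 0 u = 0}].
Proof.
move=> ltSJ; pose gJ : 'I_#|J| -> 'I_n := enum_val.
pose gS : 'I_#|~: S| -> 'I_n := enum_val.
pose U := rowsub gJ eigbasis; pose V := rowsub gS (1%:M : 'M[C]_n).
have U_unitary : U \is unitarymx.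
  by apply: rowsub_unitarymx; [exact: enum_val_inj | exact: spectral_unitarymx].
have V_unitary : V \is unitarymx.
  apply: rowsub_unitarymx; first exact: enum_val_inj.
  by apply/unitarymxP; rewrite trmx1 map_mx1 mulmx1.
have : (0 < \rank (U :&: V))%N.
  have := mxrank_sum_cap U V; have := rank_leq_col (U + V)%MS.
  have := cardsC S; rewrite (mxrank_unitary U_unitary) (mxrank_unitary V_unitary).
  rewrite card_ord; lia.
rewrite lt0n mxrank_eq0 => /rowV0Pn[f]; rewrite sub_capmx.
case/andP=> /submxP[D ->] /submxP[D' fD'] f_neq0.
exists (D *m rowsub gJ 1%:M); rewrite -mulmxA -rowsubE; split=> //.
  move=> j jNJ; apply: mulmx_rowsub1_eq0 => l; apply/eqP => gJl.
  by rewrite -gJl inE enum_valP in jNJ.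
move=> u uS; rewrite fD'; apply: mulmx_rowsub1_eq0 => l; apply/eqP => gSl.
by have := enum_valP l; rewrite -/(gS l) gSl inE uS.
Qed.

Lemma card_eigval_lt_le (S J : {set 'I_n}) (k : 'I_n -> R) :
  (forall f : 'rV[C]_n, {in S, forall u, f 0 u = 0} ->
     \sum_(v | v \notin S) (k v)%:C%C * (f 0 v * (f 0 v)^*) <= qform f) ->
  {in J & ~: S, forall j v, eigval j < k v} -> (#|J| <= #|S|)%N.
Proof.
move=> qform_ge eig_lt; rewrite leqNgt; apply/negP => ltSJ.
have [a [f_neq0 a_J f_S]] := exists_eigcomb_vanishing ltSJ.
set f := a *m eigbasis in f_neq0 f_S.
have [j1 j1J] : exists j, j \in J.
  by apply/set0Pn; rewrite -card_gt0 (leq_ltn_trans _ ltSJ).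
have [j0 j0J j0_max] := arg_maxP eigval (j1J : mem J j1).
set c := eigval j0 in j0_max.
have qform_le : qform f <= c%:C%C * sqnorm f.
  rewrite /f qform_eigbasis sqnorm_unitary ?spectral_unitarymx // mulr_sumr.
  apply: ler_sum => j _; have [jJ|jNJ] := boolP (j \in J).
    by apply: ler_wpM2r; [exact: mul_conjC_ge0 | rewrite lecR; exact: j0_max].
  by rewrite a_J ?inE // mul0r !mulr0.
have sqnormS : sqnorm f = \sum_(v | v \notin S) f 0 v * (f 0 v)^*.
  rewrite /sqnorm (bigID (mem S)) /= big1 ?add0r // => v /f_S ->.
  by rewrite mul0r.
have [v0 fv0_neq0] := rV0Pn _ f_neq0.
have v0S : v0 \notin S by apply: contra fv0_neq0 => /f_S ->.
have : c%:C%C * sqnorm f < qform f.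
  apply: lt_le_trans (qform_ge f f_S); rewrite sqnormS mulr_sumr.
  apply: (ltr_sum_at (i0 := v0)) => // [|v vS].
    by rewrite ltr_pM2r ?mul_conjC_gt0 // ltcR eig_lt // inE.
  by apply: ler_wpM2r; [exact: mul_conjC_ge0 | rewrite lecR ltW // eig_lt // inE].
by move=> /lt_le_trans/(_ qform_le); rewrite ltxx.
Qed.
End SymmetricSpectrum.

Section LaplacianQuadraticForm.
Variables (R : realType) (N : nat) (w : 'I_N -> 'I_N -> R).
Hypothesis w_sym : forall u v, w u v = w v u.
Hypothesis w_ge0 : forall u v, 0 <= w u v.
Local Notation C := R[i].
Local Notation W v u := (w v u)%:C%C.

Lemma laplacian_sym : (laplacian w)^T = laplacian w.
Proof.
apply/matrixP => v u; rewrite !mxE eq_sym w_sym.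
by case: eqP => [->|_]; rewrite ?mul0r.
Qed.

Lemma qform_laplacian (f : 'rV[C]_N) :
  qform (laplacian w) f *+ 2 =
  \sum_v \sum_u W v u * ((f 0 v - f 0 u) * (f 0 v - f 0 u)^*).
Proof.
set g := fun v => f 0 v.
have swap (F : 'I_N -> 'I_N -> C) :
    \sum_v \sum_u W v u * F u v = \sum_v \sum_u W v u * F v u.
  rewrite exchange_big; apply: eq_bigr => v _; apply: eq_bigr => u _.
  by rewrite w_sym.
have -> : \sum_v \sum_u W v u * ((g v - g u) * (g v - g u)^*) =
   (\sum_v \sum_u W v u * (g v * (g v)^*)) *+ 2
   - (\sum_v \sum_u W v u * (g v * (g u)^*)) *+ 2.
  have swap_sq : \sum_v \sum_u W v u * (g u * (g u)^*) =
                 \sum_v \sum_u W v u * (g v * (g v)^*).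
    exact: swap (fun u _ => g u * _).
  have swap_mix : \sum_v \sum_u W v u * (g u * (g v)^*) =
                  \sum_v \sum_u W v u * (g v * (g u)^*).
    exact: swap (fun u v => g u * _).
  rewrite !mulr2n -{2}swap_sq -{2}swap_mix -!big_split /= -!sumrB.
  apply: eq_bigr => v _; rewrite -!big_split /= -!sumrB; apply: eq_bigr => u _.
  by rewrite rmorphB /=; ring.
rewrite -mulrnBl; congr (_ *+ 2).
rewrite qformE -sumrB; apply: eq_bigr => v _.
under eq_bigr do
  rewrite mxE mxE rmorphB rmorphM rmorph_sum rmorph_nat /= mulrBr mulrBl.
rewrite sumrB; congr (_ - _); last by apply: eq_bigr => u _; rewrite /g; ring.
rewrite (bigD1 v) //= eqxx mul1r [X in _ + X]big1 ?addr0 => [|u]; last first.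
  by rewrite eq_sym => /negbTE ->; rewrite mul0r mulr0 mul0r.
by rewrite mulr_sumr mulr_suml; apply: eq_bigr => u _; rewrite /g; ring.
Qed.

Lemma qform_laplacian_ge0 (f : 'rV[C]_N) : 0 <= qform (laplacian w) f.
Proof.
rewrite -(pmulrn_lge0 _ (isT : (0 < 2)%N)) qform_laplacian.
by do 2![apply: sumr_ge0 => ? _]; rewrite mulr_ge0 ?ler0c ?mul_conjC_ge0.
Qed.

Lemma qform_laplacian_ge_boundary (S : {set 'I_N}) (f : 'rV[C]_N) :
  {in S, forall u, f 0 u = 0} ->
  \sum_(v | v \notin S) (\sum_(u in S) w u v)%:C%C * (f 0 v * (f 0 v)^*)
    <= qform (laplacian w) f.
Proof.
move=> f_S; rewrite -(ler_pMn2r (isT : (0 < 2)%N)) qform_laplacian.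
set T := fun v u => W v u * ((f 0 v - f 0 u) * (f 0 v - f 0 u)^*).
have T_ge0 v u : 0 <= T v u by rewrite mulr_ge0 ?ler0c ?mul_conjC_ge0.
have T_row_ge (B : pred 'I_N) v : \sum_(u | B u) T v u <= \sum_u T v u.
  by rewrite [X in _ <= X](bigID B) /= lerDl sumr_ge0.
rewrite [X in _ <= X](bigID (mem S)) /= mulr2n addrC; apply: lerD.
  apply: le_trans (ler_sum _ (fun v _ => T_row_ge (mem S) v)).
  rewrite le_eqVlt; apply/predU1P; left; apply: eq_bigr => v _.
  rewrite rmorph_sum big_distrl /=; apply: eq_bigr => u uS.
  by rewrite /T (f_S u uS) subr0 w_sym.
apply: le_trans (ler_sum _ (fun v _ => T_row_ge (predC (mem S)) v)).
rewrite exchange_big le_eqVlt; apply/predU1P; left; apply: eq_bigr => u _.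
rewrite rmorph_sum big_distrl /=; apply: eq_bigr => v vS.
by rewrite /T (f_S v vS) sub0r rmorphN mulrNN.
Qed.
End LaplacianQuadraticForm.

Lemma K0_le_degree (R : realType) N (w : 'I_N -> 'I_N -> R) (S : {set 'I_N}) v :
  v \in bnd w S -> (K0 w S <= (\sum_(u in S) w u v)%:E)%E.
Proof. by move=> vb; apply: ereal_inf_lbound; exists v. Qed.

Lemma K0_ge0 (R : realType) N (w : 'I_N -> 'I_N -> R) (S : {set 'I_N}) :
  (forall u v, 0 <= w u v) -> (0 <= K0 w S)%E.
Proof.
by move=> w_ge0; apply/ereal_infP => _ [v _ <-]; rewrite lee_fin sumr_ge0.
Qed.

Unset Implicit Arguments. Set Strict Implicit.
Theorem corollary3p4 (R : realType) (N : nat) (w : 'I_N -> 'I_N -> R)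
  (hN : (0 < N)%N)
  (w_ge0 : forall u v, 0 <= w u v)
  (w_sym : forall u v, w u v = w v u)
  (w_diag : forall u, w u u = 0)
  (hconn : connected_graph w)
  (S0 : {set 'I_N})
  (hcover : S0 :|: bnd w S0 = [set: 'I_N]) :
  (eig_count (laplacian w)
     (fun x : R => ((0 <= x) && (x%:E < K0 w S0 * (2^-1)%:E)%E)%R)
     <= #|S0|)%N /\
  (N - #|S0| <=
   eig_count (laplacian w)
     (fun x : R => ((K0 w S0 * (2^-1)%:E <= x%:E)%E && (x <= lambda_max (laplacian w)))%R))%N.
Proof.
have L_sym := laplacian_sym w_sym.
set k := (K0 w S0 * (2^-1)%:E)%E.
have k_le_K0 : (k <= K0 w S0)%E.
  by rewrite /k muleC gee_pMl ?K0_ge0 // lee_fin invf_le1 ?ler1n.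
have bnd_S0 v : v \notin S0 -> v \in bnd w S0.
  move=> vS0; have : v \in [set: 'I_N] by rewrite inE.
  by rewrite -hcover inE (negbTE vS0).
pose J := [set i | (0 <= eigval (laplacian w) i) &&
                    ((eigval (laplacian w) i)%:E < k)%E].
have card_J : (#|J| <= #|S0|)%N.
  apply: (card_eigval_lt_le L_sym (k := fun v => \sum_(u in S0) w u v)).
    exact: qform_laplacian_ge_boundary.
  move=> j v; rewrite !inE => /andP[_ jk] vS0; rewrite -lte_fin.
  exact: lt_le_trans jk (le_trans k_le_K0 (K0_le_degree (bnd_S0 v vS0))).
rewrite !(eig_countE L_sym); split.
  by rewrite (eq_card (B := J)) // => i; rewrite /J !inE.
rewrite [X in (_ <= X)%N](eq_card (B := ~: J)) => [|i]; last first.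
  rewrite /J !inE eigval_le_lambda_max // andbT.
  by rewrite (eigval_ge0 L_sym (qform_laplacian_ge0 w_sym w_ge0)) leNgt.
by have := cardsC J; rewrite card_ord; lia.
Qed.
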